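(* Let $f$ be a nontrivial permutation of $\mathbb{F}_q$ whose disjoint cycle decomposition has $t\ge1$ cycles of lengths $s_1,\dots,s_t\ge2$, and let $s:=\sum_{i=1}^t s_i$ and $k:=s+t$. Then $f$ (as a function $\mathbb{F}_q\to\mathbb{F}_q$) can be written as a composition $$f=\mu(x)\circ x^{q-2}\circ(x-a_k)\circ x^{q-2}\circ(x-a_{k-1})\circ\cdots\circ x^{q-2}\circ(x-a_1)$$ with $a_1,\dots,a_k\in\mathbb{F}_q$ and $\mu\in\mathbb{F}_q[x]$ a polynomial of degree one; i.e. $f$ is a composition of $k$ copies of $x^{q-2}$ and $k+1$ degree-one polynomials over $\mathbb{F}_q$. In particular every permutation of $\mathbb{F}_q$ is a composition of $x^{q-2}$ and degree-one polynomials over $\mathbb{F}_q$.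
   Context: Let $q>2$ be a prime power and $\mathbb{F}_q$ the field with $q$ elements. On $\mathbb{F}_q$, $x^{q-2}$ is the map $c\mapsto c^{q-2}$ (so $0\mapsto0$ and $c\mapsto c^{-1}$ for $c\neq0$). Composition is $(f\circ g)(x)=f(g(x))$. *)

From HB Require Import structures.
From mathcomp Require Import all_boot all_order all_algebra all_fingroup all_field.
Set Implicit Arguments. Unset Strict Implicit. Unset Printing Implicit Defensive.
Import GRing.Theory.
Local Open Scope ring_scope.

Definition powqm2 (F : finFieldType) (c : F) : F := c ^+ (#|F| - 2)%N.

(* For a = [:: a_1; ...; a_k], chain a = x^(q-2) o (x - a_k) o ... o x^(q-2) o (x - a_1);
   a_1 is applied first. *)
Definition inv_chain (F : finFieldType) (a : seq F) (x : F) : F :=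
  foldl (fun y ai => powqm2 (y - ai)) x a.

Definition nontriv_cycles (T : finType) (f : {perm T}) : {set {set T}} :=
  [set C in porbits f | (1 < #|C|)%N].

From HB Require Import structures.
From mathcomp Require Import all_boot all_order all_algebra all_fingroup all_field.
From mathcomp Require Import ring zify.
Set Implicit Arguments. Unset Strict Implicit. Unset Printing Implicit Defensive.
Import GRing.Theory.
Local Open Scope ring_scope.

(* We work on the projective line P = option F, where None is the point at
   infinity, and extend every chain to P by fixing infinity (pchain).  On P a
   single step  z |-> (z - b)^(q-2)  is the Moebius map  z |-> 1/(z - b)
   preceded by the transposition (b, infinity).  Since a chain is a bijection
   of P, each new transposition can be pushed to the right through the chain
   built so far; hence for all points p_1, ..., p_k of F some chain of length
   k equals  M o (oo p_1) o ... o (oo p_k)  for a Moebius map M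
   (pchain_trprod).  Conversely, a cycle of f of length s through x is the
   product of the s + 1 transpositions (oo x), (oo f^-1 x), ..., (oo f^-s x)
   (trprod_porbit); as distinct cycles are disjoint, f is a product of s + t
   transpositions through infinity (trprod_nontriv_cycles).  The Moebius map
   M obtained for this list fixes infinity, hence is affine, which is mu. *)

Section Mobius.
Variable F : fieldType.

Definition mobius (a b c d : F) (z : option F) : option F :=
  match z with
  | Some x => if c * x + d == 0 then None else Some ((a * x + b) / (c * x + d))
  | None => if c == 0 then None else Some (a / c)
  end.

Lemma mobius_id (z : option F) : mobius 1 0 0 1 z = z.
Proof.
by case: z => [x|] /=; rewrite ?eqxx // mul0r add0r oner_eq0 mul1r addr0 divr1.
Qed.

Lemma mobius_shift_inv (a b c d e : F) (z : option F) : a * d - b * c != 0 ->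
  mobius 0 1 1 (- e) (mobius a b c d z) = mobius c d (a - e * c) (b - e * d) z.
Proof.
move=> det; have detN : forall x, c * x + d = 0 -> a * x + b != 0.
  move=> x cd0; apply: contra det => /eqP ab0.
  have -> : a * d - b * c = (a * x + b) * (- c) + (c * x + d) * a by ring.
  by rewrite ab0 cd0 mul0r mul0r addr0.
case: z => [x|] /=.
  have [cd0|cd0] := eqVneq (c * x + d) 0.
    have -> : (a - e * c) * x + (b - e * d) = a * x + b.
      by rewrite -[RHS]subr0 -(mulr0 e) -cd0; ring.
    by rewrite /= oner_eq0 (negbTE (detN x cd0)) cd0 !mul0r.
  rewrite /= mul0r add0r mul1r.
  have E : (a - e * c) * x + (b - e * d) = ((a * x + b) / (c * x + d) - e) * (c * x + d).
    by field.
  rewrite E mulf_eq0 (negbTE cd0) orbF.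
  by case: eqP => // _; rewrite invfM mulrCA divff // mulr1 mul1r.
have [c0|c0] := eqVneq c 0.
  have a0 : a != 0 by apply: contra det => /eqP a0; rewrite a0 c0; apply/eqP; ring.
  by rewrite c0 mul0r mulr0 subr0 /= oner_eq0 (negbTE a0) mul0r.
rewrite /= mul0r add0r mul1r.
have -> : a - e * c = (a / c - e) * c by field.
rewrite mulf_eq0 (negbTE c0) orbF.
by case: eqP => // _; rewrite invfM mulrCA divff // mulr1 mul1r.
Qed.

Lemma mobius_affine (a b c d : F) : a * d - b * c != 0 -> mobius a b c d None = None ->
  exists2 al : F, al != 0 & exists be : F,
    forall x, mobius a b c d (Some x) = Some (al * x + be).
Proof.
move=> det /=; case: eqP => // c0 _; move: det; rewrite c0 mulr0 subr0 mulf_eq0 negb_or.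
case/andP=> a0 d0; exists (a / d); first by rewrite mulf_neq0 ?invr_eq0.
by exists (b / d) => x /=; rewrite mul0r add0r (negbTE d0) mulrDl mulrAC.
Qed.

End Mobius.

Section TranspositionProducts.
Variable T : finType.

(* trprod [:: p_1; ...; p_k] is the permutation (oo p_1) o ... o (oo p_k) of
   option T, where oo = None and (oo p) is a transposition. *)
Definition trprod (ps : seq T) (z : option T) : option T :=
  foldr (fun p w => tperm None (Some p) w) z ps.

Lemma trprod_cat (ps qs : seq T) (z : option T) :
  trprod (ps ++ qs) z = trprod ps (trprod qs z).
Proof. exact: foldr_cat. Qed.

Lemma trprod_rcons (ps : seq T) (p : T) (z : option T) :
  trprod (rcons ps p) z = trprod ps (tperm None (Some p) z).
Proof. exact: foldr_rcons. Qed.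

Lemma tperm_inj (T' : finType) (g : T -> T') (u v z : T) : injective g ->
  tperm (g u) (g v) (g z) = g (tperm u v z).
Proof.
move=> g_inj; case: (tpermP u v z) => [->|->|zu zv]; rewrite ?tpermL ?tpermR //.
by rewrite tpermD // inj_eq //; apply/eqP => e; [apply: zu | apply: zv].
Qed.

Variable f : {perm T}.

(* For distinct points y, f^-1 y, ..., f^-(n-1) y, the product of the
   transpositions (oo f^-j y) is the cycle oo -> f^-(n-1) y -> ... -> y -> oo,
   which acts like f on the points f^-j y with 0 < j < n. *)
Lemma trprod_traject (y : T) (n : nat) : uniq (traject (f^-1)%g y n) ->
  trprod (traject (f^-1)%g y n) None = (if n is m.+1 then Some (iter m (f^-1)%g y) else None)
  /\ forall z, trprod (traject (f^-1)%g y n) (Some z) =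
       if z \in traject (f^-1)%g y n then (if z == y then None else Some (f z)) else Some z.
Proof.
elim: n => [|n IH]; first by [].
rewrite trajectSr rcons_uniq => /andP [p_new /IH [IHnone IHsome]].
split; first by rewrite trprod_rcons tpermL IHsome (negbTE p_new).
move=> z; rewrite trprod_rcons mem_rcons inE.
have [->|zp] := eqVneq z (iter n (f^-1)%g y); last by rewrite tpermD ?IHsome //= eq_sym.
rewrite tpermR IHnone; case: n {IH IHnone IHsome} p_new => [|m] /=; first by rewrite eqxx.
by rewrite inE negb_or eq_sym => /andP [/negbTE -> _]; rewrite permKV.
Qed.

Lemma porbit_invE (x : T) : porbit (f^-1)%g ((f^-1)%g x) = porbit f x.
Proof.
rewrite porbitV; apply/eqP.
by rewrite eq_porbit_mem -porbitV -{1}[(f^-1)%g]expg1 mem_porbit.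
Qed.

Lemma trprod_porbit (x : T) (z : option T) :
  trprod (traject (f^-1)%g x #|porbit f x|.+1) z =
    omap (fun y => if y \in porbit f x then f y else y) z.
Proof.
set h := (f^-1)%g; set s := #|porbit f x|.
have card_hx : #|porbit h (h x)| = s by rewrite porbit_invE.
have uniq_hx : uniq (traject h (h x) s) by rewrite -card_hx uniq_traject_porbit.
have [none_case some_case] := trprod_traject uniq_hx.
have orbit_hx y : (y \in traject h (h x) s) = (y \in porbit f x).
  by rewrite -card_hx -porbit_traject porbit_invE.
rewrite trajectS; case: z => [y|] /=.
  rewrite some_case orbit_hx; case: ifP => [y_orb | y_out].
    have [->|yhx] := eqVneq y (h x); first by rewrite tpermL /h permKV.
    rewrite tpermD //; apply: contra yhx => /eqP [->]; by rewrite /h permK.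
  rewrite tpermD //; apply: contraFN y_out => /eqP [<-]; exact: porbit_id.
have card_h : #|porbit h x| = s by apply: eq_card => y; rewrite porbitV.
have iter_s : iter s h x = x by rewrite -card_h iter_porbit.
move: none_case iter_s; rewrite /s; case: #|porbit f x| (card_porbit_neq0 f x) => // m _.
by rewrite iterSr => -> ->; rewrite tpermR.
Qed.

Lemma porbits_mem (C : {set T}) (y : T) : C \in porbits f -> y \in C -> C = porbit f y.
Proof. by case/imsetP=> x _ -> y_x; apply/esym/eqP; rewrite eq_porbit_mem. Qed.

(* The product of distinct cycles of f, realized by concatenating the lists
   of trprod_porbit; disjointness of the cycles makes the pieces commute. *)
Lemma trprod_cycles (L : seq {set T}) : uniq L -> {subset L <= porbits f} ->
  exists ps : seq T, size ps = (\sum_(C <- L) #|C|.+1)%N /\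
    forall z, trprod ps z = omap (fun y => if has (fun C : {set T} => y \in C) L then f y else y) z.
Proof.
elim: L => [|C L IH] /=; first by exists [::]; rewrite big_nil; split=> // -[].
case/andP=> C_notin_L uniq_L sub_CL.
have cycC : C \in porbits f by apply: sub_CL; exact: mem_head.
have [x _ Cx] := imsetP cycC.
have [ps [size_ps trprod_ps]] := IH uniq_L (fun D DL => sub_CL D (mem_behead (s := C :: L) DL)).
exists (traject (f^-1)%g x #|C|.+1 ++ ps); split.
  by rewrite size_cat size_traject size_ps big_cons.
move=> z; rewrite trprod_cat trprod_ps Cx trprod_porbit -Cx; case: z => [y|] //=.
case: (boolP (has _ L)) => [/hasP [D DL yD] | _]; last by rewrite orbF.
have Dy : D = porbit f y by apply: porbits_mem => //; apply: sub_CL; rewrite inE DL orbT.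
have y_notin_C : y \notin C.
  by apply: contra C_notin_L => yC; rewrite (porbits_mem cycC yC) -Dy.
have fy_notin_C : f y \notin C.
  apply: contra y_notin_C => fyC; rewrite (porbits_mem cycC fyC).
  by have := porbit_perm f 1 y; rewrite expg1 => ->; exact: porbit_id.
by rewrite (negbTE fy_notin_C) orbT.
Qed.

Lemma fixed_off_nontriv_cycles (y : T) :
  (forall C, C \in nontriv_cycles f -> y \notin C) -> f y = y.
Proof.
move=> y_off; have : (#|porbit f y| <= 1)%N.
  rewrite leqNgt; apply: contraL (porbit_id f y) => big_orbit.
  by apply: y_off; rewrite inE big_orbit andbT; apply: imset_f.
have fy_orb : f y \in porbit f y by have := mem_porbit f 1 y; rewrite expg1.
by move/card_le1_eqP; apply=> //; exact: porbit_id.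
Qed.

Lemma trprod_nontriv_cycles : exists ps : seq T,
  size ps = (\sum_(C in nontriv_cycles f) #|C| + #|nontriv_cycles f|)%N /\
  forall z, trprod ps z = omap f z.
Proof.
have cycles_sub : {subset enum (nontriv_cycles f) <= porbits f}.
  by move=> C; rewrite mem_enum inE => /andP [].
have [ps [size_ps trprod_ps]] := trprod_cycles (enum_uniq _) cycles_sub.
exists ps; split.
  rewrite size_ps big_enum; under eq_bigr do rewrite -addn1.
  by rewrite big_split /= sum1_card.
move=> z; rewrite trprod_ps; case: z => [y|] //=; case: ifP => // /negbT/hasPn y_off.
by congr Some; apply/esym/fixed_off_nontriv_cycles => C C_cyc; apply: y_off; rewrite mem_enum.
Qed.

End TranspositionProducts.

Section InversionChains.
Variable F : finFieldType.
Hypothesis card_gt2 : (2 < #|F|)%N.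

(* For q > 2, x^(q-2) is the field inversion (with 0^-1 = 0). *)
Lemma powqm2E (c : F) : powqm2 c = c^-1.
Proof.
have exp_pos : (#|F| - 2 == 0)%N = false by lia.
rewrite /powqm2; have [->|c0] := eqVneq c 0; first by rewrite invr0 expr0n exp_pos.
apply: (mulIf c0); rewrite mulVf // -exprSr.
have -> : ((#|F| - 2).+1 = #|F|.-1)%N by lia.
by apply: (mulIf c0); rewrite mul1r -exprSr prednK ?expf_card //; apply: leq_trans card_gt2.
Qed.

Lemma inv_chain_inj (a : seq F) : injective (inv_chain a).
Proof.
elim: a => [|b a IH] x y //= /IH.
by rewrite !powqm2E => /invr_inj /addIr.
Qed.

Definition pchain (a : seq F) (z : option F) : option F := omap (inv_chain a) z.

Lemma pchain_inj (a : seq F) : injective (pchain a).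
Proof. by move=> [x|] [y|] //= [/inv_chain_inj ->]. Qed.

Lemma pchain_rcons (a : seq F) (b : F) (z : option F) :
  pchain (rcons a b) z = mobius 0 1 1 (- b) (tperm (Some b) None (pchain a z)).
Proof.
case: z => [x|] /=; last by rewrite tpermR /= mul1r subrr eqxx.
rewrite /inv_chain foldl_rcons -/(inv_chain a x) powqm2E.
set y := inv_chain a x; have [->|yb] := eqVneq y b.
  by rewrite tpermL /= oner_eq0 subrr invr0 mul0r.
rewrite tpermD //=; last by apply: contra yb => /eqP [->].
by rewrite mul0r add0r mul1r subr_eq0 (negbTE yb) mul1r.
Qed.

(* Every product of k transpositions through infinity, followed by a
   suitable Moebius map, is a chain of length k: the transposition (b, oo)
   created by a new step is pushed through the injective chain, where it
   becomes (p, oo) for the point p with pchain a p = b. *)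
Lemma pchain_trprod (ps : seq F) :
  exists (a : seq F) (al be ga de : F), size a = size ps /\ al * de - be * ga != 0 /\
    forall z, pchain a z = mobius al be ga de (trprod ps z).
Proof.
elim/last_ind: ps => [|ps p [a [al [be [ga [de [size_a [det chain_ps]]]]]]]].
  exists [::], 1, 0, 0, 1; split=> //; split; last by move=> z; rewrite mobius_id; case: z.
  by rewrite mulr1 mul0r subr0 oner_eq0.
set b := inv_chain a p.
exists (rcons a b), ga, de, (al - b * ga), (be - b * de); split.
  by rewrite !size_rcons size_a.
split.
  have -> : ga * (be - b * de) - de * (al - b * ga) = - (al * de - be * ga) by ring.
  by rewrite oppr_eq0.
move=> z; rewrite pchain_rcons trprod_rcons -mobius_shift_inv // -chain_ps.
congr mobius; rewrite tpermC.
by rewrite -[Some b]/(pchain a (Some p)) -[None]/(pchain a None) tperm_inj //; exact: pchain_inj.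
Qed.

End InversionChains.

Theorem mainTheorem10 (F : finFieldType) (f : {perm F}) :
  (2 < #|F|)%N -> f != 1%g ->
  let t := #|nontriv_cycles f| in
  let s := (\sum_(C in nontriv_cycles f) #|C|)%N in
  exists (a : seq F) (mu : {poly F}),
    size a = (s + t)%N /\ size mu = 2%N /\
    forall x : F, f x = mu.[inv_chain a x].
Proof.
move=> card_gt2 _ t s.
have [ps [size_ps trprod_f]] := trprod_nontriv_cycles f.
have [a [al [be [ga [de [size_a [det chain_f]]]]]]] := pchain_trprod card_gt2 ps.
have infty_fixed : mobius al be ga de None = None by rewrite -[None in LHS](trprod_f None) -chain_f.
have [c c0 [d affine]] := mobius_affine det infty_fixed.
exists a, (c^-1 *: ('X - d%:P)); split; first by rewrite size_a size_ps.
split; first by rewrite size_scale ?invr_eq0 // size_XsubC.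
move=> x; have := chain_f (Some x); rewrite trprod_f affine => -[->].
by rewrite hornerZ !hornerE mulrC addrK mulrC mulKf.
Qed.
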